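(* Let $G,H$ be graded groups, $U\subset G$ open, $\Phi:U\to H$ a smooth map and $x\in U$. If $\Phi$ is Pansu differentiable at $x$, then $\Phi$ preserves the filtration at $x$.
   Context: A graded group is a connected, simply connected nilpotent real Lie group $G$ whose Lie algebra $\mathfrak g=\bigoplus_{j\ge1}\mathfrak g_j$ (finitely many nonzero) satisfies $[\mathfrak g_i,\mathfrak g_j]\subset\mathfrak g_{i+j}$; $\exp_G$ is a global diffeomorphism. Dilations: $\delta_rX=r^jX$ for $X\in\mathfrak g_j$, $r>0$, and $\delta_r(\exp_GX)=\exp_G(\delta_rX)$. $H$ is a graded group with Lie algebra $\mathfrak h=\bigoplus_j\mathfrak h_j$. For $x\in G$, $\tau^G_x=D_0L_x:\mathfrak g\to T_xG$ (differential of left translation at the identity), similarly $\tau^H$. For smooth $\Phi$, $\mathfrak d_x\Phi:=(\tau^H_{\Phi(x)})^{-1}\circ D_x\Phi\circ\tau^G_x:\mathfrak g\to\mathfrak h$; $\Phi$ preserves the filtration at $x$ if $\mathfrak d_x\Phi(\mathfrak g_j)\subset\mathfrak h_1\oplus\dots\oplus\mathfrak h_j$ for every $j$. $\Phi$ is Pansu differentiable at $x$ if for every $z\in G$ the limit $\lim_{\varepsilon\to0^+}\delta_{\varepsilon^{-1}}(\Phi(x)^{-1}\Phi(x\delta_\varepsilon z))$ exists. *)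

From HB Require Import structures.
From mathcomp Require Import all_boot all_order all_algebra.
From mathcomp Require Import all_classical all_reals all_analysis.
Set Implicit Arguments. Unset Strict Implicit. Unset Printing Implicit Defensive.
Import Order.TTheory GRing.Theory Num.Theory.
Import numFieldNormedType.Exports.
Local Open Scope classical_set_scope.
Local Open Scope ring_scope.

Fixpoint iderive {R : realType} {V W : normedModType R}
  (vs : seq V) (f : V -> W) : V -> W :=
  if vs is v :: vs' then (fun a => 'D_v (iderive vs' f) a) else f.

Definition smooth_on {R : realType} {V W : normedModType R}
  (U : set V) (f : V -> W) : Prop :=
  forall vs : seq V,
    (forall (v : V) (a : V), U a -> derivable (iderive vs f) a v) /\
    (forall a : V, U a -> {for a, continuous (iderive vs f)}).

(* Dilations in exponential coordinates adapted to the grading. *)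
Definition dil {R : realType} {n : nat} (deg : 'I_n -> nat) (r : R)
  (x : 'rV[R]_n) : 'rV[R]_n := \row_i (r ^+ deg i * x ord0 i).

Record graded_group (R : realType) := GradedGroup {
  gdim : nat;
  gdeg : 'I_gdim -> nat;
  gmul : 'rV[R]_gdim -> 'rV[R]_gdim -> 'rV[R]_gdim;
  gdeg_pos : forall i, (0 < gdeg i)%N;
  gmulA : forall x y z, gmul x (gmul y z) = gmul (gmul x y) z;
  gmul_oneparam : forall (x : 'rV[R]_gdim) (s t : R),
      gmul (s *: x) (t *: x) = (s + t) *: x;
  gmul_smooth : smooth_on setT
      (fun z : 'rV[R]_(gdim + gdim) => gmul (lsubmx z) (rsubmx z));
  gdil_morph : forall (r : R) x y, 0 < r ->
      dil gdeg r (gmul x y) = gmul (dil gdeg r x) (dil gdeg r y)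
}.

(* group inverse: in exponential coordinates x^{-1} = -x *)
Definition ginv {R : realType} (G : graded_group R) (x : 'rV[R]_(gdim G))
  : 'rV[R]_(gdim G) := - x.

Definition gdil {R : realType} (G : graded_group R) (r : R)
  (x : 'rV[R]_(gdim G)) : 'rV[R]_(gdim G) := dil (@gdeg R G) r x.

(* tau^G_x = D_0 L_x, as a matrix acting on row vectors *)
Definition tau_mx {R : realType} (G : graded_group R) (x : 'rV[R]_(gdim G))
  : 'M[R]_(gdim G) := lin1_mx ('d (fun y => gmul x y) 0).

(* frak d_x Phi = (tau^H_{Phi x})^{-1} o D_x Phi o tau^G_x, as a matrix *)
Definition dfrak_mx {R : realType} (G H : graded_group R)
  (Phi : 'rV[R]_(gdim G) -> 'rV[R]_(gdim H)) (x : 'rV[R]_(gdim G))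
  : 'M[R]_(gdim G, gdim H) :=
  tau_mx x *m lin1_mx ('d Phi x) *m invmx (tau_mx (Phi x)).

Definition dfrak {R : realType} (G H : graded_group R)
  (Phi : 'rV[R]_(gdim G) -> 'rV[R]_(gdim H)) (x : 'rV[R]_(gdim G))
  (X : 'rV[R]_(gdim G)) : 'rV[R]_(gdim H) := X *m dfrak_mx Phi x.

Definition in_layer {R : realType} (G : graded_group R) (j : nat)
  (X : 'rV[R]_(gdim G)) : Prop := forall i, gdeg i <> j -> X ord0 i = 0.

Definition in_filtr {R : realType} (H : graded_group R) (j : nat)
  (Y : 'rV[R]_(gdim H)) : Prop := forall k, (j < gdeg k)%N -> Y ord0 k = 0.

Definition preserves_filtration_at {R : realType} (G H : graded_group R)
  (Phi : 'rV[R]_(gdim G) -> 'rV[R]_(gdim H)) (x : 'rV[R]_(gdim G)) : Prop :=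
  forall (j : nat) (X : 'rV[R]_(gdim G)),
    @in_layer R G j X -> @in_filtr R H j (dfrak Phi x X).

Definition pansu_differentiable_at {R : realType} (G H : graded_group R)
  (Phi : 'rV[R]_(gdim G) -> 'rV[R]_(gdim H)) (x : 'rV[R]_(gdim G)) : Prop :=
  forall z : 'rV[R]_(gdim G), exists l : 'rV[R]_(gdim H),
    (fun e : R => @gdil R H e^-1
        (gmul (ginv (Phi x)) (Phi (gmul x (@gdil R G e z))))) @ 0^'+ --> l.

From HB Require Import structures.
From mathcomp Require Import all_boot all_order all_algebra.
From mathcomp Require Import all_classical all_reals all_analysis.
Set Implicit Arguments. Unset Strict Implicit. Unset Printing Implicit Defensive.
Import Order.TTheory GRing.Theory Num.Theory.
Import numFieldNormedType.Exports.
Local Open Scope classical_set_scope.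
Local Open Scope ring_scope.

(* Put psi y := Phi(x)^-1 Phi(x y).  Since d(L_(a^-1)) at a inverts d(L_a) at 0,
   the matrix of frak d_x Phi is that of the differential of psi at 0, so its
   value on X is the derivative of psi along the line t X.  If X lies in g_j,
   then delta_e X = e^j X, and Pansu differentiability says that the coordinate
   psi(e^j X)_k is O(e^(deg k)); if deg k > j, the difference quotient
   psi(e^j X)_k / e^j therefore tends to 0, i.e. (D_X psi 0)_k = 0.
   Smoothness of Phi and of the group law is only used to get
   differentiability, from the continuity of partial derivatives. *)

Lemma mx_entry_le_norm (K : realDomainType) m n (M : 'M[K]_(m, n)) i j :
  `|M i j| <= `|M|.
Proof.
rewrite [leRHS]/Num.Def.normr /= mx_normrE.
by apply/bigmax_geP; right; exists (i, j).
Qed.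

Lemma mx_norm_le (K : realDomainType) m n (M : 'M[K]_(m, n)) c :
  0 <= c -> (forall i j, `|M i j| <= c) -> `|M| <= c.
Proof.
move=> c_ge0 leMc; rewrite [leLHS]/Num.Def.normr /= mx_normrE.
by apply: bigmax_le => // -[i j] _; apply: leMc.
Qed.

Lemma mulmxr_continuous (R : realType) m n (J : 'M[R]_(m, n)) :
  continuous (mulmxr J : {linear 'rV[R]_m -> 'rV[R]_n}).
Proof.
apply/linear_bounded_continuous/bounded_funP => r.
exists (m%:R * (r * `|J|)) => x le_xr /=.
have r_ge0 : 0 <= r by apply: le_trans le_xr.
apply: mx_norm_le => [|i j]; first by rewrite !mulr_ge0.
rewrite mxE (le_trans (ler_norm_sum _ _ _)) //.
rewrite mulr_natl -[X in _ *+ X]card_ord -sumr_const.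
apply: ler_sum => k _; rewrite normrM ler_pM ?mx_entry_le_norm //.
exact: le_trans (mx_entry_le_norm _ _ _) le_xr.
Qed.

Lemma ler_normB_mvt (R : realType) (g : R -> R) a b M :
  (forall t, t \in `[Num.min a b, Num.max a b] ->
     derivable g t 1 /\ `|'D_1 g t| <= M) ->
  `|g b - g a| <= M * `|b - a|.
Proof.
wlog le_ab : a b / a <= b => [wlog_ab g'M|].
  have [le_ab|/ltW le_ba] := leP a b; first exact: wlog_ab.
  rewrite distrC [`|b - a|]distrC; apply: wlog_ab => // t.
  by rewrite minC maxC; apply: g'M.
rewrite (min_l le_ab) (max_r le_ab) => g'M.
have g_cont : {within `[a, b], continuous g}.
  apply: continuous_in_subspaceT => t /[!inE] /g'M[/derivable1_diffP dg _].
  exact: differentiable_continuous.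
have [t /g'M[_ g't_le] ->] := @MVT_segment _ g (fun t => 'D_1 g t) _ _ le_ab
  (fun t abt => derivableP (g'M t (subset_itv_oo_cc abt)).1) g_cont.
by rewrite normrM ler_wpM2r.
Qed.

Lemma ler_norm_itv0 (R : realDomainType) (s t : R) :
  t \in `[Num.min 0 s, Num.max 0 s] -> `|t| <= `|s|.
Proof.
rewrite in_itv /= => /andP[le_mint le_tmax]; have [s_ge0|s_lt0] := leP 0 s.
  rewrite (min_l s_ge0) in le_mint; rewrite (max_r s_ge0) in le_tmax.
  by rewrite !ger0_norm.
rewrite (min_r (ltW s_lt0)) in le_mint; rewrite (max_l (ltW s_lt0)) in le_tmax.
by rewrite (ltr0_norm s_lt0) ler0_norm // lerN2.
Qed.

Lemma is_derive_line_coord (R : realType) n m (f : 'rV[R]_n -> 'rV[R]_m)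
    p e t j :
  derivable f (p + t *: e) e ->
  is_derive t 1 (fun s => f (p + s *: e) ord0 j) ('D_e f (p + t *: e) ord0 j).
Proof.
pose line s := f (p + s *: e).
have line_quot : (fun h : R => h^-1 *: ((line \o shift t) (h *: 1) - line t)) =
    (fun h => h^-1 *: ((f \o shift (p + t *: e)) (h *: e) - f (p + t *: e))).
  apply: funext => h /=; congr (_ *: (f _ - _)).
  by rewrite [h%:A]mulr1 scalerDl addrCA addrA.
move=> df; have dline : derivable line t 1 by rewrite /derivable line_quot.
have D_line : 'D_1 line t = 'D_e f (p + t *: e) by rewrite /derive line_quot.
split; first exact: (derivable_mxP line t 1).1 dline ord0 j.
by rewrite -D_line derive_mx // mxE.
Qed.

Lemma line_coord_increment_le (R : realType) n m (f : 'rV[R]_n -> 'rV[R]_m)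
    p e j c M s :
  (forall t, `|t| <= `|s| ->
     derivable f (p + t *: e) e /\ `|'D_e f (p + t *: e) ord0 j - c| <= M) ->
  `|f (p + s *: e) ord0 j - f p ord0 j - s * c| <= M * `|s|.
Proof.
move=> f'M; pose g t := f (p + t *: e) ord0 j - c * t.
have -> : f (p + s *: e) ord0 j - f p ord0 j - s * c = g s - g 0.
  by rewrite /g scale0r addr0 mulr0 subr0 addrAC mulrC.
rewrite -[s in M * `|s|]subr0.
apply: ler_normB_mvt => t /ler_norm_itv0 /f'M[df f'le].
have g' : is_derive t 1 g ('D_e f (p + t *: e) ord0 j - c).
  have := is_derive_line_coord j df; rewrite -[c in _ - c]mulr1.
  by move=> ?; apply: is_deriveB; exact: (is_deriveZ c (is_derive_id t 1)).
by rewrite derive_val; split.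
Qed.

Section partial_derivatives.
Variables (R : realType) (n m : nat).
Implicit Types (a h : 'rV[R]_n) (f : 'rV[R]_n -> 'rV[R]_m).
Local Notation e i := (delta_mx ord0 i : 'rV[R]_n).

Definition partial_jacobian f a : 'M[R]_(n, m) :=
  \matrix_(i, j) ('D_(e i) f a) ord0 j.

(* Vertices of the path from [a] to [a + h] that moves one coordinate at a time. *)
Definition stair a h (k : nat) : 'rV[R]_n :=
  a + \row_l (if (l < k)%N then h ord0 l else 0).

Lemma stair0 a h : stair a h 0 = a.
Proof.
by rewrite /stair (_ : \row_l _ = 0) ?addr0 //; apply/rowP => l; rewrite !mxE.
Qed.

Lemma stair_dim a h : stair a h n = a + h.
Proof. by congr (_ + _); apply/rowP => l; rewrite !mxE ltn_ord. Qed.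

Lemma stairS a h (k : 'I_n) : stair a h k.+1 = stair a h k + h ord0 k *: e k.
Proof.
rewrite /stair -addrA; congr (_ + _); apply/rowP => l; rewrite !mxE ltnS leq_eqVlt.
have [->|neq_lk] := eqVneq l k; first by rewrite ltnn !eqxx mulr1 add0r.
by move/negbTE: neq_lk; rewrite -val_eqE /= => -> /=; rewrite mulr0 addr0.
Qed.

Lemma stair_step_near a h (k : 'I_n) t :
  `|t| <= `|h| -> `|stair a h k + t *: e k - a| <= `|h|.
Proof.
move=> le_th; rewrite /stair addrAC [a + _]addrC addrK.
apply: mx_norm_le => // i l; rewrite !mxE (ord1 i).
have [->|neq_lk] := eqVneq l k; first by rewrite ltnn !eqxx mulr1 add0r.
rewrite andbF mulr0 addr0; case: ifP => _; last by rewrite normr0.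
exact: mx_entry_le_norm.
Qed.

Lemma increment_le_partials f a h eps : 0 <= eps ->
  (forall (k : 'I_n) t, `|t| <= `|h| ->
     derivable f (stair a h k + t *: e k) (e k) /\
     `|'D_(e k) f (stair a h k + t *: e k) - 'D_(e k) f a| <= eps) ->
  `|f (a + h) - f a - h *m partial_jacobian f a| <= n%:R * eps * `|h|.
Proof.
move=> eps_ge0 f'near.
have -> : f (a + h) - f a = \sum_(k < n) (f (stair a h k.+1) - f (stair a h k)).
  by rewrite -(big_mkord xpredT (fun k => f (stair a h k.+1) - f (stair a h k)))
    telescope_sumr // stair_dim stair0.
apply: mx_norm_le => [|i j]; first by rewrite !mulr_ge0.
rewrite (ord1 i) !mxE summxE -sumrB (le_trans (ler_norm_sum _ _ _)) //.
rewrite -mulrA mulr_natl -[X in _ *+ X]card_ord -sumr_const.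
apply: ler_sum => k _; rewrite stairS !mxE.
apply: le_trans (line_coord_increment_le _) _ => [t le_th|].
- have [df le_eps] := f'near k t (le_trans le_th (mx_entry_le_norm h ord0 k)).
  split=> //; apply: le_trans le_eps.
  have := mx_entry_le_norm ('D_(e k) f (stair a h k + t *: e k) - 'D_(e k) f a).
  by move=> /(_ ord0 j); rewrite !mxE.
- by rewrite ler_wpM2l // mx_entry_le_norm.
Qed.

End partial_derivatives.

Lemma differentiable_continuous_partials (R : realType) n m
    (f : 'rV[R]_n -> 'rV[R]_m) (U : set 'rV[R]_n) a :
  open U -> U a -> (forall v b, U b -> derivable f b v) ->
  (forall v, {for a, continuous (fun b => 'D_v f b)}) -> differentiable f a.
Proof.
move=> oU Ua df cont_D.
pose J := partial_jacobian f a.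
pose L : {linear 'rV[R]_n -> 'rV[R]_m} := mulmxr J.
have L_cont : continuous L by exact: mulmxr_continuous.
suff f_lin : f \o shift a = cst (f a) + (L : _ -> _) +o_ (0 : 'rV[R]_n) id.
  by apply/diff_locallyP; rewrite (diff_unique L_cont f_lin).
apply/eqaddoP => _/posnumP[eps].
pose eps' := eps%:num / n.+1%:R.
have D_near : \forall b \near a, U b /\
    forall i : 'I_n, `|'D_(delta_mx ord0 i) f a - 'D_(delta_mx ord0 i) f b| <= eps'.
  near=> b; split => [|i]; first by near: b; apply: open_nbhs_nbhs.
  move: i; near: b; apply: filter_forall => i.
  exact: (cvgrPdist_le _ _).1 (cont_D _) _ (divr_gt0 _ _).
have [d d_gt0 near_d] := (nbhs_ballP _ _).1 D_near.
apply/nbhs_ballP; exists d => // h; rewrite -ball_normE /= sub0r normrN => lt_hd.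
change (`|f (h + a) - (f a + h *m J)| <= eps%:num * `|h|).
rewrite [h + a]addrC opprD addrA.
apply: le_trans (@increment_le_partials _ _ _ _ _ _ eps' _ _) _ => [|k t le_th|].
- by rewrite divr_ge0.
- have /near_d[Ub D_le] : ball a d (stair a h k + t *: delta_mx ord0 k).
    by rewrite -ball_normE /= distrC (le_lt_trans (stair_step_near _ _ le_th)).
  by split; [exact: df | rewrite distrC].
- rewrite ler_wpM2r // /eps' mulrCA ler_piMr //.
  by rewrite ler_pdivrMr ?ltr0n // mul1r ler_nat.
Unshelve. all: by end_near. Qed.

Lemma smooth_differentiable (R : realType) n m (f : 'rV[R]_n -> 'rV[R]_m)
    (U : set 'rV[R]_n) a :
  open U -> U a -> smooth_on U f -> differentiable f a.
Proof.
move=> oU Ua smooth_f; apply: (differentiable_continuous_partials oU Ua).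
- by move=> v b Ub; exact: (smooth_f [::]).1.
- by move=> v; exact: (smooth_f [:: v]).2 a Ua.
Qed.

Section graded_group_calculus.
Variables (R : realType) (G : graded_group R).
Implicit Types x y : 'rV[R]_(gdim G).
Local Notation gmul := (@gmul R G).

Lemma gmul0l y : gmul 0 y = y.
Proof. by have := gmul_oneparam y 0 1; rewrite scale0r scale1r add0r scale1r. Qed.

Lemma gmul0r y : gmul y 0 = y.
Proof. by have := gmul_oneparam y 1 0; rewrite scale0r scale1r addr0 scale1r. Qed.

Lemma gmulNl y : gmul (- y) y = 0.
Proof.
by have := gmul_oneparam y (-1) 1; rewrite scaleN1r scale1r addNr scale0r.
Qed.

Lemma gmulKl x y : gmul (- x) (gmul x y) = y.
Proof. by rewrite gmulA gmulNl gmul0l. Qed.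

Lemma differentiable_gmul x y : differentiable (gmul x) y.
Proof.
pose mul2 z := gmul (lsubmx z) (rsubmx z).
have dmul2 z : differentiable mul2 z.
  exact: smooth_differentiable openT I (@gmul_smooth R G).
pose M : 'M[R]_(gdim G, gdim G + gdim G) := row_mx 0 1%:M.
pose L : {linear 'rV[R]_(gdim G) -> 'rV[R]_(gdim G + gdim G)} := mulmxr M.
have -> : gmul x = mul2 \o (fun y => row_mx x 0 + L y).
  apply: funext => z; rewrite /mul2 /= mul_mx_row mulmx0 mulmx1 add_row_mx.
  by rewrite addr0 add0r row_mxKl row_mxKr.
apply: differentiable_comp => //; apply: differentiableD => //.
exact/linear_differentiable/mulmxr_continuous.
Qed.

Lemma d_gmulKl x v : 'd (gmul (- x)) x ('d (gmul x) 0 v) = v.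
Proof.
have := diff_comp (differentiable_gmul x 0) (differentiable_gmul (- x) (gmul x 0)).
rewrite (_ : gmul (- x) \o gmul x = id) ?gmul0r; last exact/funext/gmulKl.
by move=> /(congr1 (fun F => F v)) /= <-; rewrite diff_val.
Qed.

Lemma invmx_tau_mx x : invmx (tau_mx x) = lin1_mx ('d (gmul (- x)) x).
Proof.
have tauK : tau_mx x *m lin1_mx ('d (gmul (- x)) x) = 1%:M.
  apply/row_matrixP => i.
  by rewrite !rowE mulmxA /tau_mx !mul_rV_lin1 /= d_gmulKl mulmx1.
have [tau_unit _] := mulmx1_unit tauK.
by rewrite -[invmx _]mulmx1 -tauK mulmxA mulVmx // mul1mx.
Qed.

Lemma in_layer0 X : @in_layer R G 0 X -> X = 0.
Proof.
move=> X0; apply/rowP => i; rewrite mxE; apply: X0 => deg_i0.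
by have := gdeg_pos i; rewrite deg_i0.
Qed.

Lemma gdil_layer j X r : @in_layer R G j X -> gdil r X = r ^+ j *: X.
Proof.
move=> Xj; apply/rowP => i; rewrite !mxE.
by have [->//|/eqP deg_ij] := eqVneq (gdeg i) j; rewrite Xj ?mulr0.
Qed.

End graded_group_calculus.

Lemma cvg_exprS_dnbhs0 (R : realType) n :
  (fun e : R => e ^+ n.+1) @ 0^'+ --> (0 : R)^'.
Proof.
move=> P /nbhs_ballP[d /= d_gt0 dP].
apply/nbhs_ballP; exists (Num.min d 1) => [|e].
  by rewrite /= lt_min d_gt0 ltr01.
rewrite -ball_normE /= sub0r normrN lt_min => /andP[lt_ed lt_e1] e_gt0.
rewrite ger0_norm ?ltW // in lt_ed lt_e1.
have le_en : e ^+ n.+1 <= e.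
  by rewrite exprS ler_piMr ?exprn_ile1 // ltW.
apply: dP; last by rewrite gt_eqF // exprn_gt0.
rewrite -ball_normE /= sub0r normrN ger0_norm ?exprn_ge0 ?ltW //.
exact: le_lt_trans le_en lt_ed.
Qed.

Lemma slope_eq0_of_scaled_cvg (R : realType) (g : R -> R) q p (D l : R) :
  (q.+1 < p)%N ->
  (fun h => h^-1 * g h) @ 0^' --> D ->
  (fun e => e^-1 ^+ p * g (e ^+ q.+1)) @ 0^'+ --> l -> D = 0.
Proof.
move=> lt_qp slope_D scaled_l.
have slope_pow := cvg_comp _ _ (@cvg_exprS_dnbhs0 R q) slope_D.
have pow_cvg0 : (fun e : R => e ^+ (p - q.+1)) @ 0^'+ --> (0 : R).
  apply: cvg_at_right_filter; have := @exprn_continuous R (p - q.+1) 0.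
  by rewrite /continuous_at expr0n subn_eq0 leqNgt lt_qp.
have scaled0 :
    (fun e => e ^+ (p - q.+1) * (e^-1 ^+ p * g (e ^+ q.+1))) @ 0^'+ --> 0.
  by rewrite -[X in _ --> X](mul0r l); apply: cvgM.
apply: (cvg_unique (@norm_hausdorff _ R^o) _ scaled0).
apply: cvg_trans slope_pow; apply: near_eq_cvg; near=> e.
have e_neq0 : e != 0 by apply: lt0r_neq0; near: e; exact: nbhs_right_gt.
rewrite /= mulrA; congr (_ * _).
rewrite exprVn -{2}(subnK (ltnW lt_qp)) exprD invfM mulrA mulfV ?mul1r //.
exact: expf_neq0.
Unshelve. all: by end_near. Qed.

Lemma cvg_derive_coord (R : realType) (V : normedModType R) m n
    (f : V -> 'M[R]_(m, n)) a v i j :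
  derivable f a v ->
  (fun h => h^-1 * (f (h *: v + a) i j - f a i j)) @ 0^' --> 'D_v f a i j.
Proof.
have -> : (fun h => h^-1 * (f (h *: v + a) i j - f a i j)) =
    (fun M => M i j) \o (fun h => h^-1 *: ((f \o shift a) (h *: v) - f a)).
  by apply: funext => h; rewrite /= !mxE.
by move=> df; apply: cvg_comp df (@coord_continuous _ _ _ i j ('D_v f a)).
Qed.

Section recentering.
Variables (R : realType) (G H : graded_group R).
Variables (Phi : 'rV[R]_(gdim G) -> 'rV[R]_(gdim H)) (x : 'rV[R]_(gdim G)).
Hypothesis dPhi : differentiable Phi x.

Definition recenter y := gmul (ginv (Phi x)) (Phi (gmul x y)).

Lemma recenter0 : recenter 0 = 0.
Proof. by rewrite /recenter gmul0r gmulNl. Qed.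

Let dPhi_gmul : differentiable (Phi \o gmul x) 0.
Proof.
apply: differentiable_comp; first exact: differentiable_gmul.
by rewrite gmul0r.
Qed.

Lemma differentiable_recenter : differentiable recenter 0.
Proof. exact: differentiable_comp dPhi_gmul (differentiable_gmul _ _). Qed.

Lemma dfrak_derive X : dfrak Phi x X = 'D_X recenter 0.
Proof.
have dPhi' : differentiable Phi (gmul x 0) by rewrite gmul0r.
have chain_outer := diff_comp dPhi_gmul
  (differentiable_gmul (ginv (Phi x)) ((Phi \o gmul x) 0)).
have chain_inner := diff_comp (differentiable_gmul x 0) dPhi'.
rewrite (deriveE _ differentiable_recenter).
change ('d recenter 0 X) with ('d (gmul (ginv (Phi x)) \o (Phi \o gmul x)) 0 X).
(* Rewriting at a ['d] on the left makes unification unfold [diff]. *)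
rewrite [in RHS]chain_outer /= [in RHS]chain_inner /= [in RHS]gmul0r.
by rewrite /dfrak /dfrak_mx invmx_tau_mx !mulmxA /tau_mx !mul_rV_lin1.
Qed.

End recentering.

Theorem lemma2p5 (R : realType) (G H : graded_group R)
  (U : set 'rV[R]_(gdim G)) (Phi : 'rV[R]_(gdim G) -> 'rV[R]_(gdim H))
  (x : 'rV[R]_(gdim G)) :
  open U -> U x -> smooth_on U Phi ->
  pansu_differentiable_at Phi x -> preserves_filtration_at Phi x.
Proof.
move=> oU Ux smooth_Phi pansu_Phi j X Xj k lt_jk.
have dPhi := smooth_differentiable oU Ux smooth_Phi.
case: j lt_jk Xj => [|j] lt_jk Xj.
  by rewrite (in_layer0 Xj) /dfrak mul0mx mxE.
rewrite dfrak_derive //.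
pose g h := recenter Phi x (h *: X) ord0 k.
have [l pansu_l] := pansu_Phi X.
apply: (@slope_eq0_of_scaled_cvg _ g j (gdeg k) _ (l ord0 k) lt_jk).
- have -> : (fun h => h^-1 * g h) = (fun h => h^-1 *
      (recenter Phi x (h *: X + 0) ord0 k - recenter Phi x 0 ord0 k)).
    by apply: funext => h; rewrite recenter0 addr0 mxE subr0.
  exact/cvg_derive_coord/diff_derivable/differentiable_recenter.
- have -> : (fun e => e^-1 ^+ gdeg k * g (e ^+ j.+1)) =
      (fun M => M ord0 k) \o (fun e => gdil e^-1 (recenter Phi x (gdil e X))).
    by apply: funext => e; rewrite /= (gdil_layer _ Xj) mxE.
  exact: cvg_comp pansu_l (@coord_continuous _ _ _ ord0 k l).
Qed.
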